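(* Let $\mathbf X$ be a periodic stationary process with period $1$, let $L$ be a first-time intrinsic location functional, and let $T\in(0,1]$. Then the càdlàg density of $L(\mathbf X,[0,T])$ on $(0,T)$ is non-increasing.
   Context: Let $H$ be a set of functions $\mathbb R\to\mathbb R$ with period $1$, invariant under shifts ($\theta_cg(x)=g(x+c)$), with the cylindrical $\sigma$-field; $\mathcal I$ is the set of compact intervals $[a,b]$, $a<b$. An intrinsic location functional is a map $L:H\times\mathcal I\to\mathbb R\cup\{\infty\}$ such that: (i) $L(\cdot,I)$ is measurable; (ii) $L(g,I)\in I\cup\{\infty\}$; (iii) $L(g,I)=L(\theta_cg,I-c)+c$ (with $\infty+c=\infty$); (iv) if $I_2\subseteq I_1$ and $L(g,I_1)\in I_2$ then $L(g,I_2)=L(g,I_1)$; (v) if $I_2\subseteq I_1$ and $L(g,I_2)\ne\infty$ then $L(g,I_1)\neq\infty$. A partially ordered random set representation of $L$ is an assignment, to each $g\in H$, of a set $S(g)\subseteq\mathbb R$ and a partial order $\preceq$ on $S(g)$ such that $S(g)=S(\theta_cg)+c$ for all $c$, $t_1\preceq t_2$ in $S(g)$ implies $t_1-c\preceq t_2-c$ in $S(\theta_cg)$, and for each $I\in\mathcal I$: if $S(g)\cap I=\emptyset$ then $L(g,I)=\infty$, otherwise $L(g,I)$ is the unique maximal element of $S(g)\cap I$ under $\preceq$. (Every intrinsic location functional has such a representation.) $L$ is a first-time intrinsic location functional if it has such a representation with the property that for all $t_1,t_2\in S(g)$, $t_1\le t_2$ implies $t_2\preceq t_1$. A periodic stationary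 process with period $1$ is a stationary process with continuous sample paths of period $1$ lying in $H$. *)

From Stdlib Require Import Reals Lra.
Open Scope R_scope.

Definition is_sigma {T : Type} (S : (T -> Prop) -> Prop) : Prop :=
  S (fun _ => True) /\
  (forall A, S A -> S (fun x => ~ A x)) /\
  (forall A : nat -> T -> Prop, (forall n, S (A n)) -> S (fun x => exists n, A n x)).

Definition generated {T : Type} (G : (T -> Prop) -> Prop) (A : T -> Prop) : Prop :=
  forall S, is_sigma S -> (forall B, G B -> S B) -> S A.

Record prob_space := {
  Omega : Type;
  event : (Omega -> Prop) -> Prop;
  Pr : (Omega -> Prop) -> R;
  event_sigma : is_sigma event;
  Pr_nonneg : forall A, event A -> 0 <= Pr A;
  Pr_full : Pr (fun _ => True) = 1;
  Pr_countably_additive : forall A : nat -> Omega -> Prop,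
      (forall n, event (A n)) ->
      (forall n m x, n <> m -> A n x -> A m x -> False) ->
      infinite_sum (fun n => Pr (A n)) (Pr (fun x => exists n, A n x))
}.

Definition shift (c : R) (g : R -> R) : R -> R := fun x => g (x + c).

Definition good_H (H : (R -> R) -> Prop) : Prop :=
  (forall g, H g -> forall x, g (x + 1) = g x) /\
  (forall g c, H g -> H (shift c g)).

(* cylindrical sigma-field on R^R: generated by the evaluations g |-> g t,
   i.e. by the sets {g | g t <= c} *)
Definition cyl_measurable (A : (R -> R) -> Prop) : Prop :=
  generated (fun B => exists t c, forall g, B g <-> g t <= c) A.

(* trace of the cylindrical sigma-field on H *)
Definition H_measurable (H : (R -> R) -> Prop) (A : (R -> R) -> Prop) : Prop :=
  exists B, cyl_measurable B /\ (forall g, H g -> (A g <-> B g)) /\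
            (forall g, A g -> H g).

(* ---------- intrinsic location functionals ----------
   A compact interval [a,b] (a<b) is encoded by its endpoints (a,b);
   the value infinity is encoded by None. *)
Definition ilf (H : (R -> R) -> Prop) (L : (R -> R) -> R -> R -> option R) : Prop :=
  (* (i) measurability of L(., I) (w.r.t. Borel sets of R u {infinity}) *)
  (forall a b, a < b ->
     H_measurable H (fun g => H g /\ L g a b = None) /\
     forall c, H_measurable H (fun g => H g /\ exists t, L g a b = Some t /\ t <= c)) /\
  (forall g a b t, H g -> a < b -> L g a b = Some t -> a <= t <= b) /\
  (forall g a b c, H g -> a < b ->
     L g a b = option_map (fun t => t + c) (L (shift c g) (a - c) (b - c))) /\
  (forall g a1 b1 a2 b2 t, H g -> a2 < b2 -> a1 <= a2 -> b2 <= b1 ->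
     L g a1 b1 = Some t -> a2 <= t <= b2 -> L g a2 b2 = Some t) /\
  (forall g a1 b1 a2 b2, H g -> a2 < b2 -> a1 <= a2 -> b2 <= b1 ->
     L g a2 b2 <> None -> L g a1 b1 <> None).

Definition po_rep (H : (R -> R) -> Prop) (L : (R -> R) -> R -> R -> option R)
  (S : (R -> R) -> R -> Prop) (le : (R -> R) -> R -> R -> Prop) : Prop :=
  (forall g, H g ->
     (forall t, S g t -> le g t t) /\
     (forall t1 t2, S g t1 -> S g t2 -> le g t1 t2 -> le g t2 t1 -> t1 = t2) /\
     (forall t1 t2 t3, S g t1 -> S g t2 -> S g t3 ->
        le g t1 t2 -> le g t2 t3 -> le g t1 t3)) /\
  (forall g c, H g -> forall t, S g t <-> S (shift c g) (t - c)) /\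
  (forall g c t1 t2, H g -> S g t1 -> S g t2 -> le g t1 t2 ->
     le (shift c g) (t1 - c) (t2 - c)) /\
  (forall g a b, H g -> a < b ->
     let inI := fun t => S g t /\ a <= t <= b in
     let maximal := fun m => inI m /\ forall u, inI u -> le g m u -> u = m in
     ((forall t, ~ inI t) -> L g a b = None) /\
     ((exists t, inI t) ->
        exists t, L g a b = Some t /\ maximal t /\ forall m, maximal m -> m = t)).

Definition first_time_ilf (H : (R -> R) -> Prop) (L : (R -> R) -> R -> R -> option R) : Prop :=
  ilf H L /\
  exists S le, po_rep H L S le /\
    forall g, H g -> forall t1 t2, S g t1 -> S g t2 -> t1 <= t2 -> le g t2 t1.

Definition periodic_stationary_process (P : prob_space) (H : (R -> R) -> Prop)
  (X : Omega P -> R -> R) : Prop :=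
  (forall w, H (X w)) /\
  (forall w, continuity (X w)) /\
  (forall t c, event P (fun w => X w t <= c)) /\
  (forall A c, cyl_measurable A ->
     Pr P (fun w => A (X w)) = Pr P (fun w => A (shift c (X w)))).

Definition cadlag_on (f : R -> R) (l r : R) : Prop :=
  forall x, l < x < r ->
    (forall eps, eps > 0 -> exists del, del > 0 /\
        forall y, x <= y < x + del -> Rabs (f y - f x) < eps) /\
    (exists lim, forall eps, eps > 0 -> exists del, del > 0 /\
        forall y, x - del < y < x -> Rabs (f y - lim) < eps).

Definition density_on (P : prob_space) (Y : Omega P -> option R) (f : R -> R) (l r : R) : Prop :=
  forall a b, l < a -> a < b -> b < r ->
    exists pr : Riemann_integrable f a b,
      RiemannInt pr = Pr P (fun w => exists t, Y w = Some t /\ a < t <= b).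

Definition nonincreasing_on (f : R -> R) (l r : R) : Prop :=
  forall x y, l < x -> x <= y -> y < r -> f y <= f x.

(* Let F x = P(L(X,[0,T]) in (0,x]).  If L(X,[0,T]) lies in (u+s, u+s+h], then so does
   L(X,[s,T]) = L(θ_s X,[0,T-s]) + s, and by stationarity θ_s X may be replaced by X.
   For a first-time functional, L(X,[0,T-s]) in (u, u+h] forces L(X,[0,T]) to be the same
   point.  Hence F is nondecreasing with nonincreasing increments, so concave on [0,T), and
   its right derivative is a cadlag nonincreasing density; conversely, every right-continuous
   density of such an F is nonincreasing. *)
From Coquelicot Require Import Coquelicot.
From Stdlib Require Import Reals Lra Psatz.
From Stdlib Require Import FunctionalExtensionality PropExtensionality ClassicalEpsilon Classical.
Open Scope R_scope.

Lemma pred_ext {T : Type} (A B : T -> Prop) : (forall x, A x <-> B x) -> A = B.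
Proof.
  intro hAB; apply functional_extensionality; intro x.
  apply propositional_extensionality, hAB.
Qed.

Section SigmaAlgebra.
Context {T : Type} (S : (T -> Prop) -> Prop).
Hypothesis hS : is_sigma S.

Lemma sigma_ext A B : S A -> (forall x, A x <-> B x) -> S B.
Proof. intros hA hAB; rewrite <- (pred_ext _ _ hAB); exact hA. Qed.

Lemma sigma_compl A : S A -> S (fun x => ~ A x).
Proof. apply hS. Qed.

Lemma sigma_empty : S (fun _ => False).
Proof. apply (sigma_ext _ _ (sigma_compl _ (proj1 hS))); tauto. Qed.

Lemma sigma_union A B : S A -> S B -> S (fun x => A x \/ B x).
Proof.
  intros hA hB.
  pose (C := fun n : nat => match n with O => A | _ => B end).
  apply (sigma_ext (fun x => exists n, C n x)).
  - apply hS; intros [|n]; assumption.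
  - intro x; split.
    + intros [[|n] hx]; [left|right]; exact hx.
    + intros [hx|hx]; [exists O|exists 1%nat]; exact hx.
Qed.

Lemma sigma_diff A B : S A -> S B -> S (fun x => A x /\ ~ B x).
Proof.
  intros hA hB.
  apply (sigma_ext _ _ (sigma_compl _ (sigma_union _ _ (sigma_compl _ hA) hB))).
  intro x; tauto.
Qed.
End SigmaAlgebra.

Lemma generated_sigma {T : Type} (G : (T -> Prop) -> Prop) : is_sigma (generated G).
Proof.
  split; [|split].
  - intros S hS _; apply hS.
  - intros A hA S hS hG; apply hS, hA; assumption.
  - intros A hA S hS hG; apply hS; intro n; apply hA; assumption.
Qed.

Lemma cyl_event (P : prob_space) (Z : Omega P -> R -> R) :
  (forall t c, event P (fun w => Z w t <= c)) ->
  forall A, cyl_measurable A -> event P (fun w => A (Z w)).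
Proof.
  intros hZ A hA.
  apply (hA (fun B => event P (fun w => B (Z w)))).
  - destruct (event_sigma P) as [hT [hC hU]]. split; [exact hT|split].
    + intros B hB; exact (hC _ hB).
    + intros B hB; exact (hU (fun n w => B n (Z w)) hB).
  - intros B [t [c hB]].
    apply (sigma_ext _ _ _ (hZ t c)); intro w; rewrite hB; tauto.
Qed.

Section Probability.
Variable P : prob_space.

Lemma Pr_ext A B : (forall w, A w <-> B w) -> Pr P A = Pr P B.
Proof. intro hAB; rewrite (pred_ext _ _ hAB); reflexivity. Qed.

Lemma event_empty : event P (fun _ => False).
Proof. apply sigma_empty, event_sigma. Qed.

Lemma is_series_Pr_empty :
  is_series (fun _ => Pr P (fun _ => False)) (Pr P (fun _ => False)).
Proof.
  pose proof (Pr_countably_additive P (fun _ _ => False) (fun _ => event_empty)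
                (fun _ _ _ _ h _ => h)) as hsum; cbv beta in hsum.
  rewrite (Pr_ext (fun w => exists n : nat, False) (fun _ => False)) in hsum
    by (intro w; split; [intros [_ []] | intros []]).
  apply is_series_Reals, hsum.
Qed.

Lemma Pr_empty : Pr P (fun _ => False) = 0.
Proof.
  pose proof (ex_series_lim_0 _ (ex_intro _ _ is_series_Pr_empty)) as h0.
  apply is_lim_seq_unique in h0. rewrite Lim_seq_const in h0.
  injection h0 as h0; exact h0.
Qed.

Lemma Pr_union_disjoint A B : event P A -> event P B ->
  (forall w, A w -> B w -> False) ->
  Pr P (fun w => A w \/ B w) = Pr P A + Pr P B.
Proof.
  intros hA hB hAB.
  pose (C := fun n : nat => match n with O => A | 1%nat => B | _ => fun _ => False end).
  assert (hC : forall n, event P (C n)) by (intros [|[|n]]; [exact hA|exact hB|exact event_empty]).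
  assert (hdisj : forall n m w, n <> m -> C n w -> C m w -> False).
  { intros [|[|n]] [|[|m]] w hnm; cbn; try tauto; intros; eapply hAB; eassumption. }
  pose proof (Pr_countably_additive P C hC hdisj) as hsum.
  rewrite (Pr_ext _ (fun w => A w \/ B w)) in hsum.
  2:{ intro w; split.
      - intros [[|[|n]] hw]; cbn in hw; tauto.
      - intros [hw|hw]; [exists O|exists 1%nat]; exact hw. }
  apply is_series_Reals in hsum.
  assert (htail : is_series (fun k => Pr P (C (2 + k)%nat)) 0).
  { pose proof is_series_Pr_empty as h0. rewrite Pr_empty in h0.
    cbn; rewrite Pr_empty; exact h0. }
  assert (hfull : is_series (fun n => Pr P (C n)) (Pr P A + Pr P B)).
  { apply (is_series_decr_n _ 2); [lia|].
    cbn -[sum_n]. rewrite sum_Sn, sum_O. cbn. change (plus ?u ?v) with (u + v).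
    change (opp ?u) with (- u).
    replace (Pr P A + Pr P B + - (Pr P A + Pr P B)) with 0 by ring. exact htail. }
  rewrite <- (is_series_unique _ _ hsum). apply is_series_unique, hfull.
Qed.

Lemma Pr_le A B : event P A -> event P B -> (forall w, A w -> B w) -> Pr P A <= Pr P B.
Proof.
  intros hA hB hAB.
  assert (hD : event P (fun w => B w /\ ~ A w))
    by (apply sigma_diff; [apply event_sigma|exact hB|exact hA]).
  rewrite (Pr_ext B (fun w => A w \/ (B w /\ ~ A w)))
    by (intro w; split; [tauto|intros [hw|hw]; [apply hAB|]; tauto]).
  rewrite Pr_union_disjoint by (assumption || tauto).
  pose proof (Pr_nonneg P _ hD); lra.
Qed.
End Probability.

Definition lands_in (o : option R) (a b : R) : Prop := exists t, o = Some t /\ a < t <= b.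

Lemma lands_in_cyl H L al be a b : ilf H L -> al < be ->
  exists B, cyl_measurable B /\ forall g, H g -> (lands_in (L g al be) a b <-> B g).
Proof.
  intros [hmeas _] hab. destruct (hmeas al be hab) as [_ hle].
  destruct (hle b) as [Bb [cBb [eBb _]]]. destruct (hle a) as [Ba [cBa [eBa _]]].
  exists (fun g => Bb g /\ ~ Ba g). split.
  - apply sigma_diff; [apply generated_sigma|exact cBb|exact cBa].
  - intros g hg. rewrite <- (eBb g hg), <- (eBa g hg). unfold lands_in. split.
    + intros [t [ht hi]]. split; [split; [exact hg|exists t; split; [exact ht|lra]]|].
      intros [_ [t' [ht' h']]]. rewrite ht in ht'. injection ht' as <-. lra.
    + intros [[_ [t [ht h]]] hn]. exists t. split; [exact ht|split; [|exact h]].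
      apply Rnot_le_lt. intro h'. apply hn. split; [exact hg|exists t; auto].
Qed.

Lemma lands_in_event P H L (Z : Omega P -> R -> R) al be a b : ilf H L -> al < be ->
  (forall w, H (Z w)) -> (forall t c, event P (fun w => Z w t <= c)) ->
  event P (fun w => lands_in (L (Z w) al be) a b).
Proof.
  intros hL hab hZ hc. destruct (lands_in_cyl H L al be a b hL hab) as [B [cB eB]].
  apply (sigma_ext _ _ _ (cyl_event P Z hc B cB)). intro w. rewrite (eB _ (hZ w)). tauto.
Qed.

Lemma lands_in_shift H L g a b s x y : ilf H L -> H g -> a + s < b ->
  lands_in (L g (a + s) b) (x + s) (y + s) -> lands_in (L (shift s g) a (b - s)) x y.
Proof.
  intros [_ [_ [hshift _]]] hg hab [t [ht hi]].
  rewrite (hshift g (a + s) b s hg hab) in ht. replace (a + s - s) with a in ht by ring.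
  destruct (L (shift s g) a (b - s)) as [t'|]; cbn in ht; [|discriminate].
  injection ht as <-. exists t'. split; [reflexivity|lra].
Qed.

Section FirstTime.
Variables (H : (R -> R) -> Prop) (L : (R -> R) -> R -> R -> option R)
  (S : (R -> R) -> R -> Prop) (le : (R -> R) -> R -> R -> Prop).
Hypothesis hL : ilf H L.
Hypothesis hrep : po_rep H L S le.
Hypothesis hfirst : forall g, H g -> forall t1 t2, S g t1 -> S g t2 -> t1 <= t2 -> le g t2 t1.

Lemma first_time_min g a b m : H g -> a < b -> L g a b = Some m ->
  S g m /\ forall t, S g t -> a <= t <= b -> m <= t.
Proof.
  intros hg hab hm. destruct hrep as [_ [_ [_ hmax]]].
  destruct (hmax g a b hg hab) as [hnone hsome]; cbn in hnone, hsome.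
  destruct (classic (exists t, S g t /\ a <= t <= b)) as [hex|hnex].
  2:{ rewrite hnone in hm; [discriminate|]. intros t ht; apply hnex; exists t; exact ht. }
  destruct (hsome hex) as [m' [hm' [[[hSm' hm'I] hmax'] _]]].
  rewrite hm in hm'. injection hm' as <-. split; [exact hSm'|].
  intros t hSt htI. apply Rnot_lt_le. intro hlt.
  enough (t = m) by lra.
  apply hmax'; [split; [exact hSt|exact htI]|apply hfirst; auto; lra].
Qed.

Lemma first_time_extend g a b b' t : H g -> a < b' -> b' <= b ->
  L g a b' = Some t -> L g a b = Some t.
Proof.
  intros hg hab' hb' ht.
  destruct hL as [_ [hrange [_ [hrestr hnotnone]]]].
  destruct (L g a b) as [m|] eqn:hm.
  2:{ exfalso. apply (hnotnone g a b a b' hg hab' (Rle_refl a) hb'); [|exact hm].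
      rewrite ht; discriminate. }
  destruct (first_time_min g a b' t hg hab' ht) as [hSt _].
  pose proof (hrange g a b' t hg hab' ht) as htI.
  destruct (first_time_min g a b m hg ltac:(lra) hm) as [_ hmin].
  pose proof (hmin t hSt ltac:(lra)).
  pose proof (hrange g a b m hg ltac:(lra) hm).
  rewrite (hrestr g a b a b' m hg hab' (Rle_refl a) hb' hm ltac:(lra)) in ht.
  exact ht.
Qed.
End FirstTime.

Lemma lands_in_restrict H L g a a' b x y : ilf H L -> H g -> a <= a' -> a' < b -> a' <= x ->
  lands_in (L g a b) x y -> lands_in (L g a' b) x y.
Proof.
  intros [_ [hrange [_ [hrestr _]]]] hg ha ha'b hx [t [ht hi]].
  pose proof (hrange g a b t hg ltac:(lra) ht).
  exists t. split; [|exact hi].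
  apply (hrestr g a b a' b t hg ha'b ha (Rle_refl b) ht). lra.
Qed.

Lemma Pr_lands_in_split P (Y : Omega P -> option R) a b c :
  (forall a b, event P (fun w => lands_in (Y w) a b)) -> a <= b <= c ->
  Pr P (fun w => lands_in (Y w) a c)
  = Pr P (fun w => lands_in (Y w) a b) + Pr P (fun w => lands_in (Y w) b c).
Proof.
  intros hY habc. rewrite <- Pr_union_disjoint; [|apply hY|apply hY|].
  - apply Pr_ext. intro w; unfold lands_in; split.
    + intros [t [ht hi]]. destruct (Rle_or_lt t b); [left|right]; exists t; split; auto; lra.
    + intros [[t [ht hi]]|[t [ht hi]]]; exists t; split; auto; lra.
  - intros w [t [ht hi]] [t' [ht' hi']]. rewrite ht in ht'. injection ht' as <-. lra.
Qed.

Section StationaryProcess.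
Variables (P : prob_space) (H : (R -> R) -> Prop) (X : Omega P -> R -> R)
  (L : (R -> R) -> R -> R -> option R).
Hypothesis hH : good_H H.
Hypothesis hX : periodic_stationary_process P H X.
Hypothesis hL : ilf H L.

Lemma process_in_H w : H (X w).
Proof. apply hX. Qed.

Lemma shifted_process_in_H s w : H (shift s (X w)).
Proof. apply hH, process_in_H. Qed.

Lemma process_event t c : event P (fun w => X w t <= c).
Proof. apply hX. Qed.

Lemma shifted_process_event s t c : event P (fun w => shift s (X w) t <= c).
Proof. apply process_event. Qed.

Lemma process_lands_in_event a b x y : a < b -> event P (fun w => lands_in (L (X w) a b) x y).
Proof. intro hab. exact (lands_in_event P H L X a b x y hL hab process_in_H process_event). Qed.

Lemma Pr_lands_in_stationary s a b x y : a < b ->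
  Pr P (fun w => lands_in (L (shift s (X w)) a b) x y)
  = Pr P (fun w => lands_in (L (X w) a b) x y).
Proof.
  intro hab. destruct (lands_in_cyl H L a b x y hL hab) as [B [cB eB]].
  rewrite (Pr_ext _ (fun w => lands_in (L (shift s (X w)) a b) x y) (fun w => B (shift s (X w))))
    by (intro w; apply eB, shifted_process_in_H).
  rewrite (Pr_ext _ (fun w => lands_in (L (X w) a b) x y) (fun w => B (X w)))
    by (intro w; apply eB, process_in_H).
  symmetry. apply hX, cB.
Qed.

Variables (S : (R -> R) -> R -> Prop) (le : (R -> R) -> R -> R -> Prop).
Hypothesis hrep : po_rep H L S le.
Hypothesis hfirst : forall g, H g -> forall t1 t2, S g t1 -> S g t2 -> t1 <= t2 -> le g t2 t1.
Variable T : R.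

Lemma first_time_law_shift_le u s h : 0 <= u -> 0 < s -> 0 < h -> u + s + h <= T ->
  Pr P (fun w => lands_in (L (X w) 0 T) (u + s) (u + s + h))
  <= Pr P (fun w => lands_in (L (X w) 0 T) u (u + h)).
Proof.
  intros hu hs hh hT.
  apply Rle_trans with (Pr P (fun w => lands_in (L (shift s (X w)) 0 (T - s)) u (u + h))).
  { apply Pr_le.
    - apply process_lands_in_event; lra.
    - exact (lands_in_event P H L _ 0 (T - s) u (u + h) hL ltac:(lra)
               (shifted_process_in_H s) (shifted_process_event s)).
    - intros w hw. apply (lands_in_shift H L (X w) 0 T s); [exact hL|apply process_in_H|lra|].
      rewrite Rplus_0_l. replace (u + h + s) with (u + s + h) by ring.
      apply (lands_in_restrict H L _ 0); auto using process_in_H; lra. }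
  rewrite Pr_lands_in_stationary by lra.
  apply Pr_le; [apply process_lands_in_event; lra|apply process_lands_in_event; lra|].
  intros w [t [ht hi]]. exists t. split; [|exact hi].
  apply (first_time_extend H L S le hL hrep hfirst _ 0 T (T - s)); auto using process_in_H; lra.
Qed.
End StationaryProcess.

Lemma is_lim_seq_inv_INR : is_lim_seq (fun n => / INR n) 0.
Proof.
  apply (is_lim_seq_inv _ p_infty is_lim_seq_INR). discriminate.
Qed.

Lemma ex_nat_mult_above q d : 0 <= q -> 0 < d ->
  exists k : nat, q < INR k * d <= q + d.
Proof.
  intros hq hd. destruct (nfloor_ex (q / d)) as [k0 [hk0 hk1]].
  { apply Rdiv_le_0_compat; lra. }
  exists (S k0). rewrite S_INR.
  assert (hqd : q = q / d * d) by (field; lra).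
  split; nra.
Qed.

Lemma noninc_left_limit (f : R -> R) l x : l < x ->
  (forall y z, l < y -> y <= z -> z <= x -> f z <= f y) ->
  exists lim, forall eps, eps > 0 -> exists del, del > 0 /\
    forall y, x - del < y < x -> Rabs (f y - lim) < eps.
Proof.
  intros hlx hf.
  set (E := fun v => exists y, l < y < x /\ v = - f y).
  assert (hb : bound E).
  { exists (- f x). intros v [y [hy ->]].
    pose proof (hf y x ltac:(lra) ltac:(lra) ltac:(lra)). lra. }
  assert (hne : exists v, E v).
  { exists (- f ((l + x) / 2)), ((l + x) / 2). split; [lra|reflexivity]. }
  destruct (completeness E hb hne) as [m [hub hleast]].
  exists (- m). intros eps heps.
  assert (hnear : exists y0, l < y0 < x /\ - f y0 > m - eps).
  { apply NNPP. intro hn.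
    enough (m <= m - eps) by lra.
    apply hleast. intros v [y [hy ->]]. apply Rnot_lt_le. intro. apply hn. exists y. auto. }
  destruct hnear as [y0 [hy0 hfy0]].
  exists (x - y0). split; [lra|]. intros y hy.
  pose proof (hf y0 y ltac:(lra) ltac:(lra) ltac:(lra)).
  assert (- f y <= m) by (apply hub; exists y; split; [lra|reflexivity]).
  rewrite Rabs_right by lra. lra.
Qed.

Lemma lub_ex (E : R -> Prop) : exists m, bound E -> (exists s, E s) -> is_lub E m.
Proof.
  destruct (classic (bound E /\ exists s, E s)) as [[hb hne]|hn].
  - destruct (completeness E hb hne) as [m hm]. exists m; auto.
  - exists 0. intros hb hne. exfalso; auto.
Qed.

Definition sup_of (E : R -> Prop) : R :=
  proj1_sig (constructive_indefinite_description _ (lub_ex E)).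

Lemma sup_of_lub E : bound E -> (exists s, E s) -> is_lub E (sup_of E).
Proof. unfold sup_of. destruct (constructive_indefinite_description _ _) as [m hm]; exact hm. Qed.

Section IncreasingWithDecreasingIncrements.
Variables (F : R -> R) (l r : R).
Hypothesis Fmono : forall x y, l <= x -> x <= y -> y <= r -> F x <= F y.
Hypothesis Fincr : forall u v h, l <= u -> u <= v -> 0 < h -> v + h <= r ->
  F (v + h) - F v <= F (u + h) - F u.

Lemma incr_steps_le p q d k : l <= p -> p <= q -> 0 < d -> q + INR k * d <= r ->
  F (q + INR k * d) - F q <= INR k * (F (p + d) - F p).
Proof.
  intros hp hpq hd. induction k as [|k IH]; intro hk.
  - rewrite INR_0, Rmult_0_l, Rplus_0_r. lra.
  - rewrite S_INR in *. pose proof (pos_INR k).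
    pose proof (Fincr p (q + INR k * d) d hp ltac:(nra) hd ltac:(lra)).
    replace (q + (INR k + 1) * d) with (q + INR k * d + d) by ring.
    specialize (IH ltac:(nra)). lra.
Qed.

Lemma incr_steps_ge p q d k : l <= p -> 0 < d -> p + INR k * d <= q + d -> q + d <= r ->
  INR k * (F (q + d) - F q) <= F (p + INR k * d) - F p.
Proof.
  intros hp hd. induction k as [|k IH]; intros hk hqd.
  - rewrite INR_0, !Rmult_0_l, Rplus_0_r. lra.
  - rewrite S_INR in *. pose proof (pos_INR k).
    pose proof (Fincr (p + INR k * d) q d ltac:(nra) ltac:(lra) hd hqd).
    replace (p + (INR k + 1) * d) with (p + INR k * d + d) by ring.
    specialize (IH ltac:(lra) hqd). lra.
Qed.

(* Cut [x, y] into n steps of length d; every step before y gains at least as much as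
   [y - d, y], and every step after y at most as much. *)
Lemma concave_slopes_approx x y z n : l <= x -> x < y -> y < z -> (1 <= n)%nat ->
  z + (y - x) / INR n <= r ->
  (F z - F y) * (y - x) <= (z - y + (y - x) / INR n) * (F y - F x).
Proof.
  intros hx hxy hyz hn hr.
  assert (hn1 : 1 <= INR n) by (apply (le_INR 1); exact hn).
  set (d := (y - x) / INR n) in *.
  assert (hnd : INR n * d = y - x) by (unfold d; field; lra).
  assert (hd : 0 < d) by (unfold d; apply Rdiv_lt_0_compat; lra).
  destruct (ex_nat_mult_above (z - y) d ltac:(lra) hd) as [k [hk1 hk2]].
  set (e := F y - F (y - d)).
  assert (he : 0 <= e) by (unfold e; pose proof (Fmono (y - d) y); nra).
  assert (hzy : F z - F y <= INR k * e).
  { pose proof (incr_steps_le (y - d) y d k ltac:(nra) ltac:(lra) hd ltac:(lra)) as hsteps.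
    replace (y - d + d) with y in hsteps by ring.
    pose proof (Fmono z (y + INR k * d) ltac:(lra) ltac:(lra) ltac:(lra)). unfold e; lra. }
  assert (hyx : INR n * e <= F y - F x).
  { pose proof (incr_steps_ge x (y - d) d n hx hd ltac:(lra) ltac:(lra)) as hsteps.
    replace (y - d + d) with y in hsteps by ring.
    replace (x + INR n * d) with y in hsteps by lra. exact hsteps. }
  pose proof (pos_INR k).
  apply Rle_trans with ((INR k * d) * (INR n * e)).
  { replace (INR k * d * (INR n * e)) with (INR k * e * (y - x)) by (rewrite <- hnd; ring).
    apply Rmult_le_compat_r; lra. }
  apply Rle_trans with ((INR k * d) * (F y - F x)); [apply Rmult_le_compat_l; nra|].
  apply Rmult_le_compat_r; [nra|lra].
Qed.

Lemma concave_slopes x y z : l <= x -> x < y -> y < z -> z < r ->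
  (F z - F y) * (y - x) <= (F y - F x) * (z - y).
Proof.
  intros hx hxy hyz hz.
  destruct (ex_nat_mult_above ((y - x) / (r - z)) 1) as [N [hN _]];
    [apply Rdiv_le_0_compat; lra|lra|].
  rewrite Rmult_1_r in hN.
  assert (hN0 : 0 < INR N) by (pose proof (Rdiv_le_0_compat (y - x) (r - z)); lra).
  assert (hbound : forall n, (N <= n)%nat ->
    (F z - F y) * (y - x) <= (z - y + (y - x) * / INR n) * (F y - F x)).
  { intros n hn. pose proof (le_INR N n hn) as hNn.
    apply concave_slopes_approx; try lra.
    - destruct N; [cbn in hN0; lra|lia].
    - assert ((y - x) / INR n <= (y - x) / INR N)
        by (apply Rmult_le_compat_l; [lra|apply Rinv_le_contravar; lra]).
      assert ((y - x) / INR N < r - z).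
      { apply (Rmult_lt_reg_r (INR N)); [lra|]. unfold Rdiv. rewrite Rmult_assoc, Rinv_l by lra.
        assert (hq : (y - x) = (y - x) / (r - z) * (r - z)) by (field; lra).
        rewrite hq at 1. nra. }
      lra. }
  assert (hlim : is_lim_seq (fun n => (z - y + (y - x) * / INR n) * (F y - F x))
                   ((z - y + (y - x) * 0) * (F y - F x))).
  { apply is_lim_seq_mult'; [|apply is_lim_seq_const].
    apply is_lim_seq_plus'; [apply is_lim_seq_const|].
    apply (is_lim_seq_scal_l _ (y - x) 0), is_lim_seq_inv_INR. }
  pose proof (is_lim_seq_le_loc (fun _ => (F z - F y) * (y - x)) _ _ _
                (ex_intro _ N hbound) (is_lim_seq_const _) hlim) as hle.
  cbn in hle. lra.
Qed.

Lemma slopes_decrease x y z : l <= x -> x < y -> y < z -> z < r ->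
  (F z - F y) / (z - y) <= (F y - F x) / (y - x).
Proof.
  intros hx hxy hyz hz. apply Rle_div_l; [lra|].
  replace ((F y - F x) / (y - x) * (z - y)) with ((F y - F x) * (z - y) / (y - x)) by (field; lra).
  apply Rle_div_r; [lra|]. apply concave_slopes; lra.
Qed.

Definition right_slopes x s := exists y, x < y < r /\ s = (F y - F x) / (y - x).

Definition right_deriv x := sup_of (right_slopes x).

Lemma right_deriv_lub x : l < x < r -> is_lub (right_slopes x) (right_deriv x).
Proof.
  intro hx. apply sup_of_lub.
  - exists ((F x - F l) / (x - l)). intros s [y [hy ->]]. apply slopes_decrease; lra.
  - exists ((F ((x + r) / 2) - F x) / ((x + r) / 2 - x)), ((x + r) / 2).
    split; [lra|reflexivity].
Qed.

Lemma incr_le_right_deriv x y : l < x -> x < y -> y < r -> F y - F x <= right_deriv x * (y - x).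
Proof.
  intros hx hxy hy. destruct (right_deriv_lub x ltac:(lra)) as [hub _].
  apply Rle_div_l; [lra|]. apply hub. exists y. split; [lra|reflexivity].
Qed.

Lemma right_deriv_le_incr x y : l < x -> x < y -> y < r -> right_deriv y * (y - x) <= F y - F x.
Proof.
  intros hx hxy hy. destruct (right_deriv_lub y ltac:(lra)) as [_ hleast].
  apply Rle_div_r; [lra|]. apply hleast. intros s [z [hz ->]]. apply slopes_decrease; lra.
Qed.

Lemma right_deriv_nonneg x : l < x < r -> 0 <= right_deriv x.
Proof.
  intro hx. pose proof (incr_le_right_deriv x ((x + r) / 2) ltac:(lra) ltac:(lra) ltac:(lra)).
  pose proof (Fmono x ((x + r) / 2) ltac:(lra) ltac:(lra) ltac:(lra)). nra.
Qed.

Lemma right_deriv_noninc x y : l < x -> x <= y -> y < r -> right_deriv y <= right_deriv x.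
Proof.
  intros hx hxy hy. destruct (Req_dec x y) as [<-|hne]; [lra|].
  pose proof (incr_le_right_deriv x y hx ltac:(lra) hy).
  pose proof (right_deriv_le_incr x y hx ltac:(lra) hy).
  apply (Rmult_le_reg_r (y - x)); lra.
Qed.

(* Pick a slope over [x, z] close to [right_deriv x]; for y slightly right of x the
   slope over [y, z] stays close to it and is below [right_deriv y]. *)
Lemma right_deriv_right_cont x : l < x < r -> forall eps, eps > 0 ->
  exists del, del > 0 /\ forall y, x <= y < x + del -> Rabs (right_deriv y - right_deriv x) < eps.
Proof.
  intros hx eps heps. pose proof (right_deriv_nonneg x hx) as hfx.
  set (fx := right_deriv x) in *.
  destruct (right_deriv_lub x hx) as [_ hleast].
  assert (hnear : exists z, x < z < r /\ (fx - eps / 2) * (z - x) < F z - F x).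
  { apply NNPP. intro hn.
    enough (fx <= fx - eps / 2) by lra.
    apply hleast. intros s [z [hz ->]]. apply Rle_div_l; [lra|].
    apply Rnot_lt_le. intro hlt. apply hn. exists z. auto. }
  destruct hnear as [z [hz hslope]].
  set (del := Rmin (z - x) (eps * (z - x) / (2 * (fx + 1)))).
  assert (hdel1 : del <= z - x) by apply Rmin_l.
  assert (hdel2 : fx * del <= eps * (z - x) / 2).
  { apply Rle_trans with (fx * (eps * (z - x) / (2 * (fx + 1)))).
    { apply Rmult_le_compat_l; [lra|apply Rmin_r]. }
    apply (Rmult_le_reg_r (2 * (fx + 1))); [lra|].
    replace (fx * (eps * (z - x) / (2 * (fx + 1))) * (2 * (fx + 1))) with (fx * (eps * (z - x)))
      by (field; lra).
    nra. }
  assert (hdel : 0 < del).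
  { apply Rmin_pos; [lra|]. apply Rdiv_lt_0_compat; [apply Rmult_lt_0_compat|]; lra. }
  exists del. split; [exact hdel|]. intros y hy.
  destruct (Req_dec y x) as [->|hne]; [rewrite Rminus_diag, Rabs_R0; lra|].
  pose proof (right_deriv_noninc x y ltac:(lra) ltac:(lra) ltac:(lra)) as hfy.
  pose proof (incr_le_right_deriv x y ltac:(lra) ltac:(lra) ltac:(lra)) as hxy.
  pose proof (incr_le_right_deriv y z ltac:(lra) ltac:(lra) ltac:(lra)).
  pose proof (right_deriv_nonneg y ltac:(lra)).
  fold fx in hfy, hxy.
  assert (fx * (y - x) <= fx * del) by (apply Rmult_le_compat_l; lra).
  assert (right_deriv y * (z - y) <= right_deriv y * (z - x)) by (apply Rmult_le_compat_l; lra).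
  assert (fx - eps < right_deriv y) by (apply (Rmult_lt_reg_r (z - x)); lra).
  rewrite Rabs_left1; lra.
Qed.

Lemma right_deriv_cadlag : cadlag_on right_deriv l r.
Proof.
  intros x hx. split; [exact (right_deriv_right_cont x hx)|].
  apply (noninc_left_limit _ l x); [lra|].
  intros y z hy hyz hz. apply right_deriv_noninc; lra.
Qed.
End IncreasingWithDecreasingIncrements.

Section MonotoneRiemannIntegral.
Variables (g F : R -> R) (a b : R).
Hypothesis g_noninc : forall x y, a <= x -> x <= y -> y <= b -> g y <= g x.
Hypothesis F_between : forall x y, a <= x -> x <= y -> y <= b ->
  g y * (y - x) <= F y - F x <= g x * (y - x).

Lemma Riemann_piece_error x0 xi x1 : a <= x0 -> x0 <= xi -> xi <= x1 -> x1 <= b ->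
  Rabs ((x1 - x0) * g xi - (F x1 - F x0)) <= (x1 - x0) * (g x0 - g x1).
Proof.
  intros h0 h0i hi1 h1.
  pose proof (F_between x0 x1 h0 ltac:(lra) h1).
  pose proof (g_noninc x0 xi h0 h0i ltac:(lra)).
  pose proof (g_noninc xi x1 ltac:(lra) hi1 h1).
  assert ((x1 - x0) * g xi <= (x1 - x0) * g x0) by (apply Rmult_le_compat_l; lra).
  assert ((x1 - x0) * g x1 <= (x1 - x0) * g xi) by (apply Rmult_le_compat_l; lra).
  apply Rabs_le. nra.
Qed.

(* The bounds on the pieces telescope. *)
Lemma Riemann_sum_error (s : @SF_seq R) : pointed_subdiv s -> a <= SF_h s ->
  seq.last (SF_h s) (SF_lx s) <= b ->
  SF_h s <= seq.last (SF_h s) (SF_lx s) /\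
  Rabs (Riemann_sum g s - (F (seq.last (SF_h s) (SF_lx s)) - F (SF_h s)))
    <= seq_step (SF_lx s) * (g (SF_h s) - g (seq.last (SF_h s) (SF_lx s))).
Proof.
  induction s as [x0|[x0 xi] s IH] using (@SF_cons_ind R); intros hptd ha hb.
  - unfold Riemann_sum; cbn. split; [apply Rle_refl|].
    change (zero : R) with 0. rewrite !Rminus_diag, Rabs_R0, Rmult_0_r. lra.
  - pose proof (hptd O ltac:(unfold SF_size; cbn; lia)) as hpt; cbn in hpt.
    change (seq.last (SF_h (SF_cons (x0, xi) s)) (SF_lx (SF_cons (x0, xi) s)))
      with (seq.last (SF_h s) (SF_lx s)) in *.
    change (SF_h (SF_cons (x0, xi) s)) with x0 in *.
    set (x1 := SF_h s) in *. set (z := seq.last x1 (SF_lx s)) in *.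
    destruct (IH (ptd_cons _ _ hptd) ltac:(lra) hb) as [hx1z herr].
    split; [lra|].
    rewrite Riemann_sum_cons. cbn [fst snd]. fold x1.
    change (plus ?u ?v) with (u + v). change (scal ?u ?v) with (u * v).
    change (SF_lx (SF_cons (x0, xi) s)) with (cons x0 (SF_lx s)).
    change (seq_step (cons x0 (SF_lx s))) with (Rmax (Rabs (x1 - x0)) (seq_step (SF_lx s))).
    pose proof (Riemann_piece_error x0 xi x1 ltac:(lra) ltac:(lra) ltac:(lra) ltac:(lra)) as hpiece.
    pose proof (Rmax_l (Rabs (x1 - x0)) (seq_step (SF_lx s))) as hm1.
    pose proof (Rmax_r (Rabs (x1 - x0)) (seq_step (SF_lx s))) as hm2.
    set (M := Rmax (Rabs (x1 - x0)) (seq_step (SF_lx s))) in *.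
    rewrite Rabs_right in hm1 by lra.
    pose proof (g_noninc x0 x1 ltac:(lra) ltac:(lra) ltac:(lra)).
    pose proof (g_noninc x1 z ltac:(lra) ltac:(lra) ltac:(lra)).
    assert ((x1 - x0) * (g x0 - g x1) <= M * (g x0 - g x1)) by (apply Rmult_le_compat_r; lra).
    assert (seq_step (SF_lx s) * (g x1 - g z) <= M * (g x1 - g z))
      by (apply Rmult_le_compat_r; lra).
    replace ((x1 - x0) * g xi + Riemann_sum g s - (F z - F x0))
      with (((x1 - x0) * g xi - (F x1 - F x0)) + (Riemann_sum g s - (F z - F x1))) by ring.
    eapply Rle_trans; [apply Rabs_triang|]. lra.
Qed.

Lemma is_RInt_of_between : a < b -> is_RInt g a b (F b - F a).
Proof.
  intro hab. apply filterlim_locally. intro eps.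
  pose proof (g_noninc a b ltac:(lra) ltac:(lra) ltac:(lra)) as hgab.
  assert (hd : 0 < eps / (g a - g b + 1)) by (apply Rdiv_lt_0_compat; [apply cond_pos|lra]).
  exists (mkposreal _ hd). intros ptd hstep [hptd [hh hl]].
  rewrite Rmin_left in hh by lra. rewrite Rmax_right in hl by lra.
  rewrite sign_eq_1 by lra.
  destruct (Riemann_sum_error ptd hptd ltac:(lra) ltac:(lra)) as [_ herr].
  rewrite hl, hh in herr. simpl in hstep.
  change (Rabs (1 * Riemann_sum g ptd - (F b - F a)) < eps). rewrite Rmult_1_l.
  pose proof (seq_step_ge_0 (SF_lx ptd)).
  assert (seq_step (SF_lx ptd) * (g a - g b) <= eps / (g a - g b + 1) * (g a - g b))
    by (apply Rmult_le_compat_r; lra).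
  assert (eps / (g a - g b + 1) * (g a - g b) < eps).
  { apply (Rmult_lt_reg_r (g a - g b + 1)); [lra|].
    replace (eps / (g a - g b + 1) * (g a - g b) * (g a - g b + 1)) with (eps * (g a - g b))
      by (field; lra).
    pose proof (cond_pos eps). nra. }
  lra.
Qed.

Lemma RiemannInt_of_between : a < b ->
  exists pr : Riemann_integrable g a b, RiemannInt pr = F b - F a.
Proof.
  intro hab. pose proof (is_RInt_of_between hab) as hI.
  assert (pr : Riemann_integrable g a b) by (apply ex_RInt_Reals_0; eexists; exact hI).
  exists pr. rewrite <- RInt_Reals. apply is_RInt_unique, hI.
Qed.
End MonotoneRiemannIntegral.

Lemma right_deriv_density (F : R -> R) l r :
  (forall x y, l <= x -> x <= y -> y <= r -> F x <= F y) ->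
  (forall u v h, l <= u -> u <= v -> 0 < h -> v + h <= r -> F (v + h) - F v <= F (u + h) - F u) ->
  forall a b, l < a -> a < b -> b < r ->
  exists pr : Riemann_integrable (right_deriv F r) a b, RiemannInt pr = F b - F a.
Proof.
  intros Fmono Fincr a b ha hab hb. apply RiemannInt_of_between; [| |exact hab].
  - intros x y hx hxy hy. apply (right_deriv_noninc F l r Fmono Fincr); lra.
  - intros x y hx hxy hy. destruct (Req_dec x y) as [<-|hne].
    + rewrite !Rminus_diag, !Rmult_0_r. lra.
    + split; [apply (right_deriv_le_incr F l r)|apply (incr_le_right_deriv F l r)]; auto; lra.
Qed.

(* If h were increasing somewhere, right continuity would make its integral over a short
   window [y, y + e] exceed the one over [x, x + e], against the increment hypothesis. *)
Lemma right_cont_density_noninc (F h : R -> R) l r :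
  (forall u v e, l <= u -> u <= v -> 0 < e -> v + e <= r -> F (v + e) - F v <= F (u + e) - F u) ->
  cadlag_on h l r ->
  (forall a b, l < a -> a < b -> b < r ->
     exists pr : Riemann_integrable h a b, RiemannInt pr = F b - F a) ->
  nonincreasing_on h l r.
Proof.
  intros Fincr hcad hdens x y hx hxy hy.
  apply Rnot_lt_le. intro hlt.
  set (eta := (h y - h x) / 3).
  assert (heta : 0 < eta) by (unfold eta; lra).
  destruct (proj1 (hcad x ltac:(lra)) eta heta) as [dx [hdx hcx]].
  destruct (proj1 (hcad y ltac:(lra)) eta heta) as [dy [hdy hcy]].
  set (e := Rmin (Rmin dx dy) ((r - y) / 2) / 2).
  pose proof (Rmin_l (Rmin dx dy) ((r - y) / 2)).
  pose proof (Rmin_r (Rmin dx dy) ((r - y) / 2)).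
  pose proof (Rmin_l dx dy). pose proof (Rmin_r dx dy).
  assert (0 < Rmin (Rmin dx dy) ((r - y) / 2)) by (apply Rmin_pos; [apply Rmin_pos|]; lra).
  assert (he : 0 < e /\ e < dx /\ e < dy /\ y + e < r) by (unfold e; lra).
  destruct (hdens x (x + e) hx ltac:(lra) ltac:(lra)) as [px ex].
  destruct (hdens y (y + e) ltac:(lra) ltac:(lra) ltac:(lra)) as [py ey].
  assert (hix : RiemannInt px <= RiemannInt (RiemannInt_P14 x (x + e) (h x + eta))).
  { apply RiemannInt_P19; [lra|]. intros t ht. unfold fct_cte.
    specialize (hcx t ltac:(lra)). apply Rabs_def2 in hcx. lra. }
  assert (hiy : RiemannInt (RiemannInt_P14 y (y + e) (h y - eta)) <= RiemannInt py).
  { apply RiemannInt_P19; [lra|]. intros t ht. unfold fct_cte.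
    specialize (hcy t ltac:(lra)). apply Rabs_def2 in hcy. lra. }
  rewrite RiemannInt_P15 in hix, hiy.
  pose proof (Fincr x y e ltac:(lra) hxy ltac:(lra) ltac:(lra)).
  assert ((h x + eta) * e < (h y - eta) * e) by (apply Rmult_lt_compat_r; unfold eta; lra).
  replace (x + e - x) with e in hix by ring. replace (y + e - y) with e in hiy by ring.
  lra.
Qed.

Theorem mainTheorem10 (P : prob_space) (H : (R -> R) -> Prop)
  (X : Omega P -> R -> R) (L : (R -> R) -> R -> R -> option R) (T : R) :
  good_H H ->
  periodic_stationary_process P H X ->
  first_time_ilf H L ->
  0 < T -> T <= 1 ->
  (exists f, cadlag_on f 0 T /\ density_on P (fun w => L (X w) 0 T) f 0 T) /\
  (forall f, cadlag_on f 0 T -> density_on P (fun w => L (X w) 0 T) f 0 T ->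
     nonincreasing_on f 0 T).
Proof.
  intros hH hX [hL [S [le [hrep hfirst]]]] hT _.
  set (F := fun x => Pr P (fun w => lands_in (L (X w) 0 T) 0 x)).
  assert (hlaw : forall a b, 0 <= a <= b ->
            Pr P (fun w => lands_in (L (X w) 0 T) a b) = F b - F a).
  { intros a b hab. unfold F.
    rewrite (Pr_lands_in_split P _ 0 a b); [ring| |lra].
    intros; apply (process_lands_in_event P H X L hX hL), hT. }
  assert (Fmono : forall x y, 0 <= x -> x <= y -> y <= T -> F x <= F y).
  { intros x y hx hxy hy. pose proof (hlaw x y ltac:(lra)).
    pose proof (Pr_nonneg P _ (process_lands_in_event P H X L hX hL 0 T x y hT)). lra. }
  assert (Fincr : forall u v h, 0 <= u -> u <= v -> 0 < h -> v + h <= T ->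
            F (v + h) - F v <= F (u + h) - F u).
  { intros u v h hu huv hh hvh. destruct (Req_dec u v) as [<-|huv']; [lra|].
    rewrite <- !hlaw by lra. replace v with (u + (v - u)) by ring.
    apply (first_time_law_shift_le P H X L hH hX hL S le hrep hfirst); lra. }
  split.
  - exists (right_deriv F T). split; [exact (right_deriv_cadlag F 0 T Fmono Fincr)|].
    intros a b ha hab hb.
    destruct (right_deriv_density F 0 T Fmono Fincr a b ha hab hb) as [pr hpr].
    exists pr. rewrite hpr, <- hlaw by lra. reflexivity.
  - intros f hcad hdens. apply (right_cont_density_noninc F f 0 T Fincr hcad).
    intros a b ha hab hb. destruct (hdens a b ha hab hb) as [pr hpr].
    exists pr. rewrite hpr, <- hlaw by lra. reflexivity.
Qed.
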